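(* Let $p=p(n)=o\!\left(\frac1n\right)$. Then for all sufficiently large $n\in\mathbb{N}$ we have $u_2(n,p)=0$ and $u_2'(n,p)=0$.
   Context: $G(n,p)$ is the Erdős–Rényi random graph on $n$ labelled vertices (vertex set $V$), each edge present independently with probability $p=p(n)$; $\mathbb{P}_{n,p}$ is the corresponding probability and $q=1-p$. A diameter graph in $\mathbb{R}^d$ is a graph $(V,E)$ with $V\subset\mathbb{R}^d$ finite and $E=\{\{\mathbf{x},\mathbf{y}\}\subseteq V: |\mathbf{x}-\mathbf{y}|=\operatorname{diam}V\}$, where $\operatorname{diam}V=\max_{\mathbf{x},\mathbf{y}\in V}|\mathbf{x}-\mathbf{y}|$ (Euclidean norm); a graph is a diameter graph in $\mathbb{R}^d$ if it is isomorphic to one. $u_d(n,p)$ is the largest positive integer $k$ such that $\mathbb{P}_{n,p}\big(\exists W\subseteq V,\ |W|=k,\ G[W]$ is a diameter graph in $\mathbb{R}^d$ and $\chi(G[W])=d+1\big)>\frac12$, where $G[W]$ is the induced subgraph; if no such $k$ exists, $u_d(n,p)=0$. $u_d'(n,p)$ is defined identically with the additional requirement that $G[W]$ be connected. *)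

From Stdlib Require Import Reals ClassicalEpsilon.
From mathcomp Require Import all_boot.

Set Implicit Arguments. Unset Strict Implicit. Unset Printing Implicit Defensive.

Definition pbool (P : Prop) : bool :=
  if excluded_middle_informative P then true else false.

Definition epair (n : nat) := {x : 'I_n * 'I_n | x.1 < x.2}.

Definition graph (n : nat) := {set epair n}.

Definition adj (n : nat) (G : graph n) (i j : 'I_n) : bool :=
  [exists e : epair n, (e \in G) && ((val e == (i, j)) || (val e == (j, i)))].

Definition prob (n : nat) (p : R) (A : graph n -> Prop) : R :=
  \big[Rplus/R0]_(G : {set epair n} | pbool (A G))
     (Rmult (pow p #|G|) (pow (Rminus 1 p) (#|{: epair n}| - #|G|))).

Definition point (d : nat) := 'I_d -> R.

Definition dist (d : nat) (x y : point d) : R :=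
  sqrt (\big[Rplus/R0]_(i < d) (pow (Rminus (x i) (y i)) 2)).

Definition diamW (d n : nat) (W : {set 'I_n}) (f : 'I_n -> point d) : R :=
  \big[Rmax/R0]_(x in W) \big[Rmax/R0]_(y in W) dist (f x) (f y).

(* G[W] is isomorphic to the diameter graph on the point set f(W) in R^d. *)
Definition is_diameter_graph (d n : nat) (G : graph n) (W : {set 'I_n}) : Prop :=
  exists f : 'I_n -> point d,
    {in W &, injective f} /\
    (forall x y, x \in W -> y \in W -> x != y ->
       (adj G x y <-> dist (f x) (f y) = diamW W f)).

Definition colorable (n : nat) (G : graph n) (W : {set 'I_n}) (k : nat) : Prop :=
  exists c : 'I_n -> nat,
    (forall x, x \in W -> c x < k) /\
    (forall x y, x \in W -> y \in W -> adj G x y -> c x <> c y).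

Definition chromatic_number_is (n : nat) (G : graph n) (W : {set 'I_n}) (k : nat)
  : Prop :=
  colorable G W k /\ (forall j, j < k -> ~ colorable G W j).

Definition connectedW (n : nat) (G : graph n) (W : {set 'I_n}) : Prop :=
  forall x y, x \in W -> y \in W ->
    connect (fun a b => [&& a \in W, b \in W & adj G a b]) x y.

Definition event (d n k : nat) (conn : bool) (G : graph n) : Prop :=
  exists W : {set 'I_n}, #|W| = k /\ is_diameter_graph d G W /\
    chromatic_number_is G W d.+1 /\ (conn -> connectedW G W).

(* u is the largest positive k with P(event) > 1/2, or 0 if none exists. *)
Definition is_u_gen (conn : bool) (d n : nat) (p : R) (u : nat) : Prop :=
  (u = 0 /\ forall k, 0 < k -> ~ (Rgt (@prob n p (event d k conn)) (Rinv (INR 2)))) \/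
  (0 < u /\ (Rgt (@prob n p (event d u conn)) (Rinv (INR 2))) /\
     forall k, 0 < k -> (Rgt (@prob n p (event d k conn)) (Rinv (INR 2))) -> k <= u).

Definition is_u (d n : nat) (p : R) (u : nat) : Prop := is_u_gen false d n p u.
Definition is_u' (d n : nat) (p : R) (u : nat) : Prop := is_u_gen true d n p u.

(* A fixed cycle of length l is
   present in G(n,p) with probability p^l and there are at most n^l of them, so
   a cycle exists with probability at most sum_(l >= 3) (np)^l.  Once np <= 1/8
   this is below 1/2, so no k is admissible and u_2 = u_2' = 0. *)

From Stdlib Require Import Reals Lra Classical ClassicalEpsilon.
From HB Require Import structures.
From mathcomp Require Import all_boot zify.

Set Implicit Arguments. Unset Strict Implicit. Unset Printing Implicit Defensive.

Lemma pboolP (P : Prop) : reflect P (pbool P).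
Proof. by rewrite /pbool; case: excluded_middle_informative => h; constructor. Qed.

Section Graph.
Variables (n : nat) (G : graph n).

Lemma adj_sym x y : adj G x y = adj G y x.
Proof.
by apply/existsP/existsP => -[e /andP [eG h]]; exists e; rewrite eG orbC.
Qed.

Lemma adj_irr x : adj G x x = false.
Proof.
apply/existsP => -[[[a b] /= ab] /andP [_ /orP [] /eqP [ea eb]]];
  by rewrite ea eb ltnn in ab.
Qed.

Definition two_nbrs (S : {set 'I_n}) (x : 'I_n) :=
  exists y z, [/\ y \in S, z \in S, y != z, adj G x y & adj G x z].

Definition mindeg2 (S : {set 'I_n}) :=
  S != set0 /\ {in S, forall x, two_nbrs S x}.

Lemma colorable_set0 k : colorable G set0 k.
Proof. by exists (fun=> 0%N); split => x; rewrite inE. Qed.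

Lemma colorable2_setD1 (W : {set 'I_n}) x : x \in W -> ~ two_nbrs W x ->
  colorable G (W :\ x) 2 -> colorable G W 2.
Proof.
move=> xW nx [c [c2 cP]].
pose cx := if [pick z in W :\ x | adj G x z] is Some z then 1 - c z else 0.
pose c' y := if y == x then cx else c y.
have cxP y : y \in W :\ x -> adj G x y -> cx <> c y.
  move=> yW' axy; rewrite /cx; case: pickP => [z /andP [zW' axz]|/(_ y)]; last first.
    by rewrite yW' axy.
  have -> : z = y.
    apply: NNPP => zy; apply: nx; exists z, y.
    by split => //; [case/setD1P: zW' | case/setD1P: yW' | apply/eqP].
  by have := c2 y yW'; lia.
have inD y : y \in W -> y != x -> y \in W :\ x by move=> yW yx; rewrite !inE yx.
exists c'; split=> [y yW|y y' yW y'W ayy'].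
  rewrite /c' /cx; case: eqVneq => [_|yx]; last exact/c2/inD.
  by case: pickP => // z _; lia.
rewrite /c'; case: (eqVneq y x) => [yx|yx]; case: (eqVneq y' x) => [y'x|y'x].
- by move: ayy'; rewrite yx y'x adj_irr.
- by rewrite yx in ayy'; exact: cxP (inD _ y'W y'x) ayy'.
- by move=> /esym; apply: cxP (inD _ yW yx) _; rewrite -y'x adj_sym.
- exact: cP (inD _ yW yx) (inD _ y'W y'x) ayy'.
Qed.

Lemma colorable2_or_mindeg2 (W : {set 'I_n}) :
  colorable G W 2 \/ exists2 S : {set 'I_n}, S \subset W & mindeg2 S.
Proof.
elim: {W}#|W| {-2}W (eqxx #|W|) => [|k IH] W /eqP cardW.
  by left; move/cards0_eq: cardW => ->; apply: colorable_set0.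
case: (classic (exists2 x, x \in W & ~ two_nbrs W x)) => [[x xW nx]|all2].
  have cardWx : #|W :\ x| == k by rewrite (cardsD1 x W) xW in cardW; apply/eqP; lia.
  case: (IH _ cardWx) => [col|[S SWx mS]]; first by left; apply: colorable2_setD1 nx col.
  by right; exists S => //; apply: subset_trans SWx (subsetDl _ _).
right; exists W => //; split.
  by apply/set0Pn; apply/card_gt0P; rewrite cardW.
by move=> x xW; apply: NNPP => nx; apply: all2; exists x.
Qed.

Definition is_cycle l (f : {ffun 'I_l -> 'I_n}) :=
  forall i : 'I_l, adj G (f i) (f (ordS i)).

Definition upath (S : {set 'I_n}) L (g : nat -> 'I_n) :=
  [/\ {in [pred i | i < L] &, injective g},
      forall i, i.+1 < L -> adj G (g i) (g i.+1) &
      forall i, i < L -> g i \in S].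

Lemma upath_le S L g : upath S L g -> L <= n.
Proof.
case=> ginj _ _.
have uniq_g : uniq (map g (iota 0 L)).
  by rewrite map_inj_in_uniq ?iota_uniq // => i j; rewrite !mem_iota; apply: ginj.
have := card_uniqP uniq_g; rewrite size_map size_iota => <-.
exact: leq_trans (max_card _) (eq_leq (card_ord n)).
Qed.

Lemma upath_cons S L g u : upath S L g -> u \in S -> adj G u (g 0) ->
  (forall j, j < L -> g j != u) ->
  upath S L.+1 (fun i => if i is i'.+1 then g i' else u).
Proof.
case=> ginj gadj gS uS aug gu; split=> [[|i] [|j]|[|i]|[|i]] //=; rewrite ?inE.
- by move=> _ jL /esym/eqP; rewrite (negbTE (gu j jL)).
- by move=> iL _ /eqP; rewrite (negbTE (gu i iL)).
- by move=> iL jL /ginj ->.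
- exact: gadj.
- exact: gS.
Qed.

Lemma ordS_val l (i : 'I_l) : nat_of_ord (ordS i) = if i.+1 == l then 0 else i.+1.
Proof.
case: eqP => [/= ->|/eqP il]; first by rewrite modnn.
by rewrite /= modn_small //; have := ltn_ord i; lia.
Qed.

Lemma ordS_neq l (i : 'I_l) : 1 < l -> ordS i != i.
Proof.
move=> l1; apply/eqP => /(congr1 (@nat_of_ord _)).
by rewrite ordS_val; case: (i.+1 =P l); lia.
Qed.

Lemma ordS2_neq l (i : 'I_l) : 2 < l -> ordS (ordS i) != i.
Proof.
move=> l2; apply/eqP => /(congr1 (@nat_of_ord _)); have := ltn_ord i.
by rewrite !ordS_val; case: (i.+1 =P l) => /= ?; case: eqP; lia.
Qed.

Lemma upath_cycle S L g j : upath S L g -> 2 <= j < L -> adj G (g 0) (g j) ->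
  exists f : {ffun 'I_j.+1 -> 'I_n}, injective f /\ is_cycle f.
Proof.
case=> ginj gadj _ /andP [j2 jL] a0j.
exists [ffun i : 'I_j.+1 => g i]; split=> [a b|i]; rewrite !ffunE.
  move/ginj=> ab; apply/val_inj/ab; rewrite inE.
  - by have := ltn_ord a; lia.
  - by have := ltn_ord b; lia.
rewrite ordS_val; case: eqP => [ij|ij].
  by rewrite adj_sym; have -> : nat_of_ord i = j by lia.
by apply: gadj; have := ltn_ord i; lia.
Qed.

Lemma mindeg2_cycle S : mindeg2 S ->
  exists l, 3 <= l /\ exists f : {ffun 'I_l -> 'I_n}, injective f /\ is_cycle f.
Proof.
(* A longest path in S cannot be extended, so the second neighbour of its
   first vertex lies on it and closes a cycle. *)
case=> /set0Pn [x0 x0S] deg2.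
pose P L := pbool (exists g, upath S L g).
have P1 : P 1 by apply/pboolP; exists (fun=> x0); split=> // i j; rewrite !inE; lia.
have Pbound L : P L -> L <= n by case/pboolP => g /upath_le.
have [L /pboolP [g gp] Lmax] := ex_maxnP (ex_intro _ 1 P1) Pbound.
have L0 : 0 < L := Lmax 1 P1.
have [_ _ gS] := gp.
have [y [z [yS zS yz ay az]]] := deg2 (g 0) (gS 0 L0).
have [u [uS au ug1]] : exists u, [/\ u \in S, adj G (g 0) u & 1 < L -> u != g 1].
  case: (eqVneq y (g 1)) => [yg1|yg1]; last by exists y.
  by exists z; split=> // _; rewrite -yg1 eq_sym.
case: (classic (exists2 j, j < L & g j = u)) => [[j jL gj]|unew]; last first.
  suff /Lmax : P L.+1 by lia.
  apply/pboolP; eexists; apply: upath_cons gp uS _ _; first by rewrite adj_sym.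
  by move=> j jL; apply/eqP => gj; apply: unew; exists j.
have j0 : j != 0 by apply: contraTneq au => j0; rewrite -gj j0 adj_irr.
have j1 : j != 1.
  apply/eqP => j1; have /ug1 : 1 < L by lia.
  by rewrite -gj j1 eqxx.
exists j.+1; split; first by lia.
by apply: upath_cycle gp _ _; [lia | rewrite gj].
Qed.

Lemma not_colorable2_cycle (W : {set 'I_n}) : ~ colorable G W 2 ->
  exists l : 'I_n.+1, 3 <= l /\
    exists f : {ffun 'I_l -> 'I_n}, injectiveb f /\ is_cycle f.
Proof.
case: (colorable2_or_mindeg2 W) => [//|[S _ /mindeg2_cycle [l [l3 [f [finj fc]]]]] _].
have ln : l < n.+1 by have := leq_card f finj; rewrite !card_ord.
by exists (Ordinal ln); split=> //; exists f; split=> //; apply/injectiveP.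
Qed.

End Graph.

Lemma event2_cycle n k conn (G : graph n) : event 2 k conn G ->
  exists l : 'I_n.+1, 3 <= l /\
    exists f : {ffun 'I_l -> 'I_n}, injectiveb f /\ is_cycle G f.
Proof. by case=> W [_ [_ [[_ /(_ 2 (ltnSn 2)) /not_colorable2_cycle]]]]. Qed.

Lemma RplusA : associative Rplus. Proof. by move=> x y z; rewrite Rplus_assoc. Qed.
Lemma RmultA : associative Rmult. Proof. by move=> x y z; rewrite Rmult_assoc. Qed.
HB.instance Definition _ := Monoid.isComLaw.Build R R0 Rplus RplusA Rplus_comm Rplus_0_l.
HB.instance Definition _ := Monoid.isComLaw.Build R R1 Rmult RmultA Rmult_comm Rmult_1_l.
HB.instance Definition _ := Monoid.isMulLaw.Build R R0 Rmult Rmult_0_l Rmult_0_r.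
HB.instance Definition _ :=
  Monoid.isAddLaw.Build R Rmult Rplus Rmult_plus_distr_r Rmult_plus_distr_l.

Open Scope R_scope.

Lemma sumR_ge0 (I : finType) (P : pred I) (F : I -> R) :
  (forall i, P i -> 0 <= F i) -> 0 <= \big[Rplus/R0]_(i | P i) F i.
Proof. by move=> F0; apply: big_ind => [|x y|//]; lra. Qed.

Lemma ler_sumR (I : finType) (P : pred I) (F G : I -> R) :
  (forall i, P i -> F i <= G i) ->
  \big[Rplus/R0]_(i | P i) F i <= \big[Rplus/R0]_(i | P i) G i.
Proof. by move=> FG; apply: big_ind2 => [|x1 x2 y1 y2|//]; lra. Qed.

Lemma ler_sumR_sub (I : finType) (P Q : pred I) (F : I -> R) :
  (forall i, Q i -> 0 <= F i) -> (forall i, P i -> Q i) ->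
  \big[Rplus/R0]_(i | P i) F i <= \big[Rplus/R0]_(i | Q i) F i.
Proof.
move=> F0 PQ; rewrite [X in _ <= X](bigID P) /=.
rewrite (eq_bigl P); last by move=> i; apply/andP/idP => [[]|Pi] //; rewrite PQ.
suff : 0 <= \big[Rplus/R0]_(i | Q i && ~~ P i) F i by lra.
by apply: sumR_ge0 => i /andP [Qi _]; apply: F0.
Qed.

Lemma sumR_const (I : finType) (P : pred I) (c : R) :
  \big[Rplus/R0]_(i | P i) c = INR #|P| * c.
Proof.
rewrite big_const; elim: #|P| => /= [|k ->]; first lra.
by rewrite -/(INR k.+1) S_INR; lra.
Qed.

Lemma prodR_const (I : finType) (P : pred I) (c : R) :
  \big[Rmult/R1]_(i | P i) c = c ^ #|P|.
Proof. by rewrite big_const; elim: #|P| => //= k ->. Qed.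

Lemma pow_le_decr (x : R) (a b : nat) : 0 <= x <= 1 -> (a <= b)%N -> x ^ b <= x ^ a.
Proof.
move=> x01 ab; rewrite -(subnK ab) pow_add.
have := pow_incr x 1 (b - a) x01; rewrite pow1.
have := pow_le x a (proj1 x01); have := pow_le x (b - a) (proj1 x01); nra.
Qed.

Lemma INR_expn a b : INR (a ^ b) = INR a ^ b.
Proof. by elim: b => //= b IH; rewrite expnS mult_INR IH. Qed.

Lemma pow_le_geometric x l : 0 <= x <= /8 -> (1 <= l)%N -> x ^ l <= /4 * (/2) ^ l.
Proof.
move=> x8 l1; apply: Rle_trans (pow_incr x (/4 * /2) l _) _; first lra.
rewrite Rpow_mult_distr; apply: Rmult_le_compat_r; first by apply: pow_le; lra.
by have := @pow_le_decr (/4) 1 l ltac:(lra) l1; rewrite pow_1.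
Qed.

Lemma sum_half_pow m : \big[Rplus/R0]_(l < m) (/2) ^ l <= 2.
Proof.
suff -> : \big[Rplus/R0]_(l < m) (/2) ^ l = 2 - 2 * (/2) ^ m.
  by have := pow_le (/2) m; lra.
elim: m => [|m IH]; first by rewrite big_ord0 /=; lra.
by rewrite big_ord_recr IH /=; lra.
Qed.

Section Probability.
Variables (n : nat) (p : R).
Hypothesis p01 : 0 <= p <= 1.

Definition weight (G : graph n) : R :=
  p ^ #|G| * (1 - p) ^ (#|{: epair n}| - #|G|).

Lemma weight_ge0 G : 0 <= weight G.
Proof. by apply: Rmult_le_pos; apply: pow_le; lra. Qed.

Lemma prob_mono (A B : graph n -> Prop) :
  (forall G, A G -> B G) -> prob p A <= prob p B.
Proof.
move=> AB; apply: ler_sumR_sub => [G _|G /pboolP /AB /pboolP //].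
exact: weight_ge0.
Qed.

Lemma prob_union (I : finType) (P : pred I) (A : I -> graph n -> Prop) :
  prob p (fun G => exists i, P i /\ A i G) <= \big[Rplus/R0]_(i | P i) prob p (A i).
Proof.
have -> : \big[Rplus/R0]_(i | P i) prob p (A i) =
    \big[Rplus/R0]_(G : graph n) \big[Rplus/R0]_(i | P i && pbool (A i G)) weight G.
  under [RHS]eq_bigr do rewrite big_mkcondr.
  by rewrite -exchange_big; apply: eq_bigr => i _; rewrite /prob big_mkcond.
apply: Rle_trans (ler_sumR_sub _ (fun G _ => isT)); last first.
  by move=> G _; apply: sumR_ge0 => i _; apply: weight_ge0.
apply: ler_sumR => G /pboolP [i [Pi Ai]].
rewrite -/(weight G) (bigD1 i) /=; last by rewrite Pi; apply/pboolP.
suff : 0 <= \big[Rplus/R0]_(j | (P j && pbool (A j G)) && (j != i)) weight G by lra.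
by apply: sumR_ge0 => j _; apply: weight_ge0.
Qed.

Lemma weightE G :
  weight G = \big[Rmult/R1]_(e : epair n) (if e \in G then p else 1 - p).
Proof.
rewrite (bigID (mem G)) /= (eq_bigr (fun=> p)) => [|e ->] //.
rewrite [X in _ * X](eq_bigr (fun=> 1 - p)) => [|e /negbTE ->] //.
rewrite !prodR_const /weight -(cardsC G) addKn.
by congr (p ^ _ * (1 - p) ^ _); apply: eq_card => e; rewrite !inE.
Qed.

(* Summing the product weight over all graphs factorises edge by edge. *)
Lemma prob_superset (E : {set epair n}) :
  prob p (fun G => E \subset G) = p ^ #|E|.
Proof.
pose F (e : epair n) (b : bool) := if b then p else if e \in E then 0 else 1 - p.
have -> : prob p (fun G => E \subset G) =
    \big[Rplus/R0]_(G : graph n) \big[Rmult/R1]_(e : epair n) F e (e \in G).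
  rewrite /prob (bigID (fun G : graph n => pbool (E \subset G)) predT) /=.
  rewrite [X in _ = _ + X]big1 ?Rplus_0_r => [|G /pboolP /negP /subsetPn [e eE eG]].
    apply: eq_bigr => G /pboolP /subsetP EG; rewrite -/(weight G) weightE.
    apply: eq_bigr => e _; rewrite /F.
    by case eG: (e \in G); case eE: (e \in E) => //; rewrite EG in eG.
  by rewrite (bigD1 e) //= /F (negbTE eG) eE Rmult_0_l.
rewrite (reindex (fun f : {ffun epair n -> bool} => FinSet f)) /=; last first.
  by exists (@finfun_of_set _) => [f|[f]].
under eq_bigr do under eq_bigr do rewrite [_ \in _]unfold_in unlock /=.
rewrite -bigA_distr_bigA /= (eq_bigr (fun e => if e \in E then p else 1)).
  by rewrite -big_mkcond prodR_const; congr (_ ^ _); apply: eq_card.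
by move=> e _; rewrite big_bool /F; case: (e \in E) => /=; lra.
Qed.

Definition link (a b : 'I_n) (e : epair n) := (val e == (a, b)) || (val e == (b, a)).

Lemma link_exists a b : a != b -> exists e, link a b e.
Proof.
move=> ab; case: (ltngtP a b) => [lt_ab|lt_ba|/val_inj eq_ab].
- by exists (exist _ (a, b) lt_ab); rewrite /link eqxx.
- by exists (exist _ (b, a) lt_ba); rewrite /link eqxx orbT.
- by rewrite eq_ab eqxx in ab.
Qed.

Lemma link_ends a b c d e : link a b e -> link c d e ->
  (a = c /\ b = d) \/ (a = d /\ b = c).
Proof. by rewrite /link; case/orP=> /eqP ->; case/orP=> /eqP [-> ->]; auto. Qed.

Lemma link_inj a b e e' : link a b e -> link a b e' -> e = e'.
Proof.
rewrite /link => le le'; apply: val_inj; move: (valP e) (valP e') le le'.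
case: (val e) => x y; case: (val e') => x' y' /=.
by move=> lt lt' /orP [] /eqP [? ?] /orP [] /eqP [? ?]; subst => //; lia.
Qed.

Lemma prob_cycle l (f : {ffun 'I_l -> 'I_n}) : (3 <= l)%N -> injective f ->
  prob p (fun G => is_cycle G f) <= p ^ l.
Proof.
move=> l3 finj.
have [g gP] : exists g : 'I_l -> epair n, forall i, link (f i) (f (ordS i)) (g i).
  apply: (fin_all_exists (U := fun=> epair n)
           (P := fun i e => link (f i) (f (ordS i)) e)) => i.
  by apply: link_exists; rewrite (inj_eq finj) eq_sym ordS_neq //; lia.
have ginj : injective g.
  move=> i j gij; have := gP j; rewrite -gij => /(link_ends (gP i)).
  case=> [[/finj //]|[/finj eq_i /finj eq_j]].
  by move: (ordS2_neq j l3); rewrite -eq_i eq_j eqxx.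
have cycle_sub G : is_cycle G f -> g @: setT \subset G.
  move=> cG; apply/subsetP => _ /imsetP [i _ ->].
  by have /existsP [e /andP [eG /(link_inj (gP i)) ->]] := cG i.
apply: Rle_trans (prob_mono cycle_sub) _; rewrite prob_superset.
by apply: pow_le_decr; rewrite // card_imset // cardsT card_ord.
Qed.

Lemma prob_cycle_length l : (3 <= l)%N ->
  prob p (fun G => exists f : {ffun 'I_l -> 'I_n}, injectiveb f /\ is_cycle G f)
    <= (INR n * p) ^ l.
Proof.
move=> l3; apply: Rle_trans (prob_union _ _) _.
apply: Rle_trans (ler_sumR (G := fun=> p ^ l) _) _.
  by move=> f /injectiveP; apply: prob_cycle.
rewrite sumR_const Rpow_mult_distr -INR_expn.
apply: Rmult_le_compat_r; first by apply: pow_le; lra.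
apply/le_INR/leP; apply: leq_trans (max_card _) _.
by rewrite card_ffun !card_ord.
Qed.

Lemma prob_event2_le_half k conn : INR n * p <= /8 ->
  @prob n p (event 2 k conn) <= /2.
Proof.
move=> np_small; have np0 : 0 <= INR n * p by have := pos_INR n; nra.
apply: Rle_trans (prob_mono (@event2_cycle n k conn)) _.
apply: Rle_trans (prob_union _ _) _.
apply: Rle_trans (ler_sumR (G := fun l : 'I_n.+1 => /4 * (/2) ^ l) _) _.
  move=> l l3; apply: Rle_trans (prob_cycle_length l3) _.
  by apply: pow_le_geometric; [lra | lia].
apply: Rle_trans (ler_sumR_sub (Q := predT) _ _) _ => //.
  by move=> l _; have := pow_le (/2) l; lra.
rewrite -big_distrr /=.
by apply: Rle_trans (Rmult_le_compat_l _ _ _ _ (sum_half_pow n.+1)) _; lra.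
Qed.

End Probability.

Close Scope R_scope.

Theorem theorem13 (p : nat -> R)
  (hp : forall n : nat, Rle R0 (p n) /\ Rle (p n) R1)
  (ho : Un_cv (fun n : nat => Rmult (INR n) (p n)) R0) :
  exists N : nat, forall n : nat, N <= n ->
    is_u 2 n (p n) 0 /\ is_u' 2 n (p n) 0.
Proof.
Local Open Scope R_scope.
have [N hN] := ho (/8) ltac:(lra).
exists N => n /leP le_Nn.
have np_small : INR n * p n <= /8.
  by have := hN n le_Nn; rewrite /R_dist Rminus_0_r => /Rabs_def2; lra.
have small k conn : ~ @prob n (p n) (event 2 k conn) > / INR 2.
  by have := prob_event2_le_half (hp n) k conn np_small; rewrite /=; lra.
by split; left; split=> // k _; apply: small.
Qed.
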